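(* Let $s(\cdot)\in\mathcal{P}(\mathbb{R})$ with $s(x)=s_0>2$ for all $x\in[4,5]$. Then the kernel $\tilde K(x,y)=K_1(y)K_2(x-y-1)$ does not belong to $H_{s(\cdot),2}$; in particular $\tilde K\notin H_{s(\cdot)}$.
   Context: Here $n=1$. Fix $\beta>0$; $K_1(t)=\chi_{[2,3]}(t)$ and $K_2(t)=t^{-1/2}\big[\log(e/t)\big]^{-\frac{1+\beta}{2}}\chi_{(0,1)}(t)$. Cubes are intervals $Q$; $mQ$ is the concentric interval of length $m\ell(Q)$. $\mathcal{P}(\mathbb{R})$: measurable $p(\cdot):\mathbb{R}\to[1,\infty]$; $\|f\|_{p(\cdot)}=\inf\{\lambda>0:\int_{\{p<\infty\}}|f/\lambda|^{p(x)}dx+\|(f/\lambda)\chi_{\{p=\infty\}}\|_\infty\le1\}$. $K\in H_{s(\cdot),2}$ means $\sup_Q\sup_{x,z\in\frac12Q}\sum_{m\ge1}2^m\ell(Q)\frac{\|[K(\cdot,x)-K(\cdot,z)]\chi_{2^mQ\setminus2^{m-1}Q}\|_{s(\cdot)}}{\|\chi_{2^mQ}\|_{s(\cdot)}}<\infty$; $H_{s(\cdot)}=H_{s(\cdot),1}\cap H_{s(\cdot),2}$, where $H_{s(\cdot),1}$ is the same condition with $K(x,\cdot)-K(z,\cdot)$. *)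

From HB Require Import structures.
From mathcomp Require Import all_boot all_order all_algebra.
From mathcomp Require Import all_classical all_reals all_analysis.
From mathcomp Require Import measurable_realfun ess_sup_inf.
Set Implicit Arguments. Unset Strict Implicit. Unset Printing Implicit Defensive.
Import Order.TTheory GRing.Theory Num.Theory.
Local Open Scope classical_set_scope.
Local Open Scope ring_scope.

Section VarLeb.
Variable R : realType.
Local Notation mu := (@lebesgue_measure R).

Definition var_exponent (p : R -> \bar R) : Prop :=
  measurable_fun [set: R] p /\ (forall x, (1%:E <= p x)%E).

Definition var_modular (p : R -> \bar R) (f : R -> R) (lam : R) : \bar R :=
  ((\int[mu]_(x in [set x | p x != +oo%E]) ((`|f x| / lam) `^ fine (p x))%:E)
   + ess_sup mu (fun x => if p x == +oo%E then (`|f x| / lam)%:E else 0%E))%E.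

(* Luxemburg norm ||f||_{p(.)} (= +oo if no admissible lambda) *)
Definition var_norm (p : R -> \bar R) (f : R -> R) : \bar R :=
  ereal_inf [set lam%:E | lam in [set lam : R | 0 < lam /\ (var_modular p f lam <= 1%:E)%E]].

(* interval Q with center c and length l; m Q is the concentric interval of length m*l *)
Definition dil_interval (c l m : R) : set R := `[c - m * l / 2, c + m * l / 2].

Definition H2_term (s : R -> \bar R) (K : R -> R -> R) (c l x z : R) (m : nat) : \bar R :=
  ((2 ^+ m * l)%R%:E *
   (var_norm s (fun y => ((K y x - K y z) *
       \1_(dil_interval c l (2 ^+ m) `\` dil_interval c l (2 ^+ m.-1)) y)%R)
    * (var_norm s (\1_(dil_interval c l (2 ^+ m)))) ^-1))%E.

Definition H1_term (s : R -> \bar R) (K : R -> R -> R) (c l x z : R) (m : nat) : \bar R :=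
  ((2 ^+ m * l)%R%:E *
   (var_norm s (fun y => ((K x y - K z y) *
       \1_(dil_interval c l (2 ^+ m) `\` dil_interval c l (2 ^+ m.-1)) y)%R)
    * (var_norm s (\1_(dil_interval c l (2 ^+ m)))) ^-1))%E.

Definition in_H2 (s : R -> \bar R) (K : R -> R -> R) : Prop :=
  (ereal_sup [set v | exists c l x z : R, [/\ (0 < l)%R, dil_interval c l (2^-1)%R x,
       dil_interval c l (2^-1)%R z & v = (\sum_(1 <= m <oo) H2_term s K c l x z m)%E]]
   < +oo)%E.

Definition in_H1 (s : R -> \bar R) (K : R -> R -> R) : Prop :=
  (ereal_sup [set v | exists c l x z : R, [/\ (0 < l)%R, dil_interval c l (2^-1)%R x,
       dil_interval c l (2^-1)%R z & v = (\sum_(1 <= m <oo) H1_term s K c l x z m)%E]]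
   < +oo)%E.

Definition in_H (s : R -> \bar R) (K : R -> R -> R) : Prop := in_H1 s K /\ in_H2 s K.

Definition K1 (t : R) : R := \1_(`[2, 3] : set R) t.
Definition K2 (beta t : R) : R :=
  if (0 < t) && (t < 1) then t `^ (- (1/2)) * (ln (expR 1 / t)) `^ (- ((1 + beta) / 2))
  else 0.
Definition Ktilde (beta : R) (x y : R) : R := K1 y * K2 beta (x - y - 1).


End VarLeb.

From mathcomp Require Import all_boot all_order all_algebra.
From mathcomp Require Import all_classical all_reals all_analysis.
From mathcomp Require Import measurable_realfun ess_sup_inf.
From mathcomp Require Import ring lra.
Set Implicit Arguments. Unset Strict Implicit. Unset Printing Implicit Defensive.
Import Order.TTheory GRing.Theory Num.Theory.
Local Open Scope classical_set_scope.
Local Open Scope ring_scope.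

(** Take Q = [0, 4], x = 3 and z = 1 in the H_{s(.),2} condition.  On the
    annulus 2Q \ Q = [-2, 6] \ [0, 4] the difference K(., 3) - K(., 1) is
    K_2(. - 4) on (4, 6], because K_1(3) = 1 and K_1(1) = 0.  As s = s0 > 2 on
    [4, 5] and K_2(t)^s0 behaves like t^(-s0/2) up to logarithmic factors, this
    function has infinite L^{s(.)} norm, whereas the norm of the indicator of 2Q
    is finite: the m = 1 summand of the condition is already +oo. *)

Section ge0_integral_subset.
Local Open Scope ereal_scope.
Context d (T : measurableType d) (R : realType) (mu : {measure set T -> \bar R}).

(* Unlike [ge0_le_integral], no measurability is needed: a nonnegative
   integral is a supremum over the simple functions below the integrand. *)
Lemma ge0_le_integral_subset (D E : set T) (f g : T -> \bar R) :
  D `<=` E -> (forall x, D x -> 0 <= f x) -> (forall x, E x -> 0 <= g x) ->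
  (forall x, D x -> f x <= g x) ->
  \int[mu]_(x in D) f x <= \int[mu]_(x in E) g x.
Proof.
move=> DE f0 g0 fg; rewrite !ge0_integralE //.
apply: ereal_sup_le => _ [h hf <-]; exists h => // x.
apply: le_trans (hf x) _; rewrite /patch.
case: ifP => [/set_mem Dx|_]; first by rewrite ifT ?fg //; exact/mem_set/DE.
by case: ifP => // /set_mem; exact: g0.
Qed.

End ge0_integral_subset.

Lemma ge1r_powR_nneg (R : realType) (a r : R) : 0 <= a <= 1 -> 1 <= r -> a `^ r <= a.
Proof.
case/andP=> a0 a1 r1; have [->|a_neq0] := eqVneq a 0.
  by rewrite powR0 // gt_eqF // (lt_le_trans ltr01 r1).
by apply: ge1r_powR => //; rewrite lt_def a_neq0 a0.
Qed.

Section ln_sublinear.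
Variable R : realType.

Lemma ln_le_tangent (k u : R) : 0 < k -> 0 < u -> ln u <= k * u - 1 - ln k.
Proof.
move=> k0 u0; have := expR_ge1Dx (ln (k * u)).
by rewrite lnK ?posrE ?mulr_gt0 // lnM ?posrE //; lra.
Qed.

Lemma linear_dominates_ln (A b c u1 : R) : 0 < b -> 0 <= c ->
  exists2 u, u1 <= u & A + c * ln u <= b * u.
Proof.
move=> b0 c0; pose k := b / (2 * (c + 1)).
have k0 : 0 < k by rewrite divr_gt0 // mulr_gt0 //; lra.
have ck_le : c * k <= b / 2.
  have -> : b / 2 = (c + 1) * k by rewrite /k; field; lra.
  by rewrite ler_wpM2r ?ltW //; lra.
pose B := A - c * (1 + ln k).
pose u := Num.max (Num.max u1 1) (2 * B / b).
exists u; first by rewrite /u !le_max lexx.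
have u1_le : 1 <= u by rewrite /u !le_max lexx orbT.
have Bu : 2 * B <= b * u by rewrite -ler_pdivrMl // mulrC /u le_max lexx orbT.
have c_ln : c * ln u <= c * k * u - c * (1 + ln k).
  have := ler_wpM2l c0 (ln_le_tangent k0 (lt_le_trans ltr01 u1_le)).
  lra.
have cku : c * k * u <= b / 2 * u by rewrite ler_wpM2r //; lra.
by rewrite /B in Bu; lra.
Qed.

End ln_sublinear.

Section K2.
Variable R : realType.
Implicit Types beta t : R.

Lemma K2_ge0 beta t : 0 <= K2 beta t.
Proof. by rewrite /K2; case: ifP => // _; rewrite mulr_ge0 ?powR_ge0. Qed.

Lemma ln_K2 beta t : 0 < t < 1 ->
  ln (K2 beta t) = - ln t / 2 - (1 + beta) / 2 * ln (1 - ln t).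
Proof.
case/andP=> t0 t1; rewrite /K2 t0 t1 /=.
have L_gt0 : 0 < 1 - ln t by rewrite subr_gt0 (lt_trans (ln_lt0 _)) ?t0.
rewrite ln_div ?posrE ?expR_gt0 // expRK.
by rewrite lnM ?posrE ?powR_gt0 // !ln_powR; ring.
Qed.

Lemma K2_gt0 beta t : 0 < t < 1 -> 0 < K2 beta t.
Proof.
case/andP=> t0 t1; rewrite /K2 t0 t1 /= mulr_gt0 ?powR_gt0 //.
by rewrite ln_div ?posrE ?expR_gt0 // expRK subr_gt0 (lt_trans (ln_lt0 _)) ?t0.
Qed.

End K2.

(* With u = 1 - ln eps, on [eps, 2 eps] the logarithm of (K2 t / lam)^q is at
   least q (u - 1 - ln 2) / 2 - q (1 + beta) / 2 * ln u - q ln lam, which beats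
   ln (2 / eps) = ln 2 + u - 1 for u large since q / 2 > 1. *)
Lemma K2_powR_blowup (R : realType) (beta lam q : R) :
  0 < beta -> 0 < lam -> 2 < q ->
  exists eps, [/\ 0 < eps, 2 * eps < 1 &
    forall t, eps <= t <= 2 * eps -> 2 / eps <= (K2 beta t / lam) `^ q].
Proof.
move=> beta0 lam0 q2.
have ln2_ge0 : 0 <= ln (2 : R) by rewrite ln_ge0 // ler1n.
have b0 : 0 < q / 2 - 1 by lra.
have c0 : 0 <= q * ((1 + beta) / 2) by rewrite mulr_ge0 //; lra.
have [u u_ge dom] := linear_dominates_ln
  (ln 2 - 1 + q * (1 + ln 2) / 2 + q * ln lam) (2 + ln 2) b0 c0.
pose eps := expR (1 - u).
have eps0 : 0 < eps := expR_gt0 _.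
have eps2 : 2 * eps = expR (ln 2 + (1 - u)) by rewrite expRD lnK ?posrE.
exists eps; split => //; first by rewrite eps2 expR_lt1; lra.
move=> t /andP[eps_le le_eps2].
have t0 : 0 < t := lt_le_trans eps0 eps_le.
have t1 : t < 1 by rewrite (le_lt_trans le_eps2) // eps2 expR_lt1; lra.
have lnt_ge : 1 - u <= ln t by rewrite -(expRK (1 - u)) ler_ln ?posrE.
have lnt_le : ln t <= ln 2 + (1 - u) by rewrite -[_ + _]expRK -eps2 ler_ln ?posrE ?mulr_gt0.
have lnL_le : ln (1 - ln t) <= ln u by rewrite ler_ln ?posrE; lra.
have K2t_gt0 : 0 < K2 beta t by apply: K2_gt0; rewrite t0.
rewrite -ler_ln ?posrE ?powR_gt0 ?divr_gt0 // ln_powR ln_div ?posrE //.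
rewrite ln_K2 ?t0 // ln_div ?posrE // expRK.
have q0 : 0 <= q by lra.
have := ler_wpM2l q0 lnt_le; have := ler_wpM2l c0 lnL_le.
lra.
Qed.

Section var_norm.
Variable R : realType.
Local Notation mu := (@lebesgue_measure R).
Implicit Types (p : R -> \bar R) (f : R -> R).

Lemma var_norm_ge0 p f : (0 <= var_norm p f)%E.
Proof.
by apply: le_ereal_inf_tmp => _ [lam [lam0 _] <-]; rewrite lee_fin ltW.
Qed.

Lemma var_norm_pinfty p f :
  (forall lam, 0 < lam -> (1 < var_modular p f lam)%E) -> var_norm p f = +oo%E.
Proof.
move=> modular_gt1; apply/ereal_inf_pinfty => _ [lam [lam0 modular_le1] <-].
by have := modular_gt1 _ lam0; rewrite ltNge modular_le1.
Qed.

Lemma integral_le_var_modular p f lam : 0 <= lam ->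
  (\int[mu]_(x in [set x | p x != +oo%E]) ((`|f x| / lam) `^ fine (p x))%:E
    <= var_modular p f lam)%E.
Proof.
move=> lam0; rewrite /var_modular leeDl //; apply: ess_sup_gee.
  have muT : mu [set: R] = +oo%E.
    by have := @lebesgue_measure_itv R `]-oo, +oo[; rewrite set_itvNyy.
  by rewrite -[X in (_ < X)%E]/(mu [set: R]) muT.
by apply: nearW => x; case: ifP => _ //; rewrite lee_fin divr_ge0.
Qed.

Lemma var_norm_indic_itv_lt_pinfty p (u v : R) :
  (forall x, (1%:E <= p x)%E) -> u <= v ->
  (var_norm p (\1_(`[u, v] : set R)) < +oo)%E.
Proof.
move=> p_ge1 uv.
pose lam := v - u + 1.
have lam_ge1 : 1 <= lam by rewrite /lam; lra.
have lam0 : 0 < lam by lra.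
have indic01 x : 0 <= (\1_(`[u, v] : set R) x : R) <= 1.
  by rewrite indicE; case: (_ \in _); rewrite ?lexx ?ler01.
apply: (@le_lt_trans _ _ lam%:E); last exact: ltry.
apply: ereal_inf_lbound; exists lam => //; split => //.
have int_le : (\int[mu]_(x in [set x | p x != +oo%E])
    ((`|\1_(`[u, v] : set R) x| / lam) `^ fine (p x))%:E <= ((v - u) / lam)%:E)%E.
  apply: le_trans (@ge0_le_integral_subset _ _ _ mu _ setT _
      (fun x => (lam^-1 * \1_(`[u, v] : set R) x)%:E) _ _ _ _) _ => //.
  - by move=> x _; rewrite lee_fin powR_ge0.
  - move=> x _; case/andP: (indic01 x) => i0 _.
    by rewrite lee_fin mulr_ge0 // invr_ge0 ltW.
  - move=> x /= p_fin; case/andP: (indic01 x) => i0 i1.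
    rewrite lee_fin ger0_norm // mulrC; apply: ge1r_powR_nneg.
      have lamV01 : 0 <= lam^-1 <= 1 by rewrite invr_ge0 invf_le1 // ltW.
      by case/andP: lamV01 => ? ?; rewrite mulr_ge0 //= mulr_ile1.
    by move: p_fin (p_ge1 x); case: (p x) => //= r _; rewrite lee_fin.
  under eq_integral do rewrite EFinM.
  rewrite ge0_integralZl_EFin //; last 2 first.
  - by apply/measurable_EFinP/measurable_indic; exact: measurable_itv.
  - by rewrite invr_ge0 ltW.
  rewrite integral_indic //= setIT lebesgue_measure_itv /= lte_fin.
  case: ltP => _; first by rewrite -EFinD -EFinM lee_fin mulrC.
  by rewrite mule0 lee_fin divr_ge0 ?subr_ge0 // ltW.
have ess_le : (ess_sup mu (fun x => if p x == +oo%E then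
    (`|\1_(`[u, v] : set R) x| / lam)%:E else 0%E) <= (lam^-1)%:E)%E.
  apply/ess_supP; apply: nearW => x; case: ifP => _; rewrite lee_fin.
    have /andP[i0 i1] := indic01 x.
    by rewrite ger0_norm // ler_pdivrMr // mulVf ?gt_eqF.
  by rewrite invr_ge0 ltW.
apply: le_trans (leeD int_le ess_le) _.
rewrite -EFinD lee_fin -[X in _ + X]mul1r -mulrDl.
by rewrite ler_pdivrMr // mul1r /lam.
Qed.

Lemma var_norm_K2_pinfty p f (beta s0 a : R) : 0 < beta -> 2 < s0 ->
  (forall x, a <= x <= a + 1 -> p x = s0%:E) ->
  (forall y, a < y <= a + 1 -> K2 beta (y - a) <= `|f y|) ->
  var_norm p f = +oo%E.
Proof.
move=> beta0 s02 p_s0 K2_le; apply: var_norm_pinfty => lam lam0.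
have [eps [eps0 eps2 blowup]] := K2_powR_blowup beta0 lam0 s02.
pose I := [set` `[a + eps, a + 2 * eps]] : set R.
have I_itv y : I y -> a + eps <= y <= a + 2 * eps by rewrite /I /= in_itv.
have muI : mu I = eps%:E.
  rewrite lebesgue_measure_itv /= lte_fin ifT; last lra.
  by congr EFin; ring.
apply: lt_le_trans (integral_le_var_modular _ _ (ltW lam0)).
apply: (@lt_le_trans _ _ (\int[mu]_(x in I) (2 / eps)%:E)%E).
  rewrite integral_cst /=; last exact: measurable_itv.
  by rewrite muI -EFinM divfK ?gt_eqF // lte_fin ltr1n.
apply: ge0_le_integral_subset.
- by move=> y /I_itv Iy; rewrite /= p_s0 //; lra.
- by move=> y _; rewrite lee_fin divr_ge0 // ltW.
- by move=> y _; rewrite lee_fin powR_ge0.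
move=> y /I_itv Iy; rewrite p_s0 /=; last lra.
rewrite lee_fin; apply: le_trans (blowup (y - a) _) _; first lra.
have K2_le_f : K2 beta (y - a) / lam <= `|f y| / lam.
  by rewrite ler_pM2r ?invr_gt0 // K2_le //; lra.
apply: ge0_ler_powR K2_le_f; first lra.
  by rewrite nnegrE divr_ge0 ?K2_ge0 // ltW.
by rewrite nnegrE divr_ge0 // ltW.
Qed.

End var_norm.

Section H2_condition.
Variable R : realType.

Lemma H2_term_ge0 (s : R -> \bar R) K c l x z m : 0 <= l ->
  (0 <= H2_term s K c l x z m)%E.
Proof.
move=> l0; rewrite /H2_term mule_ge0 ?lee_fin ?mulr_ge0 ?exprn_ge0 //.
by rewrite mule_ge0 ?inve_ge0 ?var_norm_ge0.
Qed.

Lemma not_in_H2 (s : R -> \bar R) K c l x z m :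
  0 < l -> dil_interval c l 2^-1 x -> dil_interval c l 2^-1 z -> (1 <= m)%N ->
  H2_term s K c l x z m = +oo%E -> ~ in_H2 s K.
Proof.
move=> l0 Qx Qz m_ge1 term_pinfty; rewrite /in_H2; apply/negP.
rewrite -leNgt leye_eq; apply/eqP/ereal_supy; exists c, l, x, z; split => //.
apply/esym/eqP; rewrite eq_le leey /= -term_pinfty.
have term_ge0 n : (1 <= n)%N -> true -> (0 <= H2_term s K c l x z n)%E.
  by move=> _ _; exact/H2_term_ge0/ltW.
apply: le_trans (nneseries_lim_ge m.+1 term_ge0).
by rewrite big_nat_recr //= leeDr // sume_ge0 // => n _; apply/H2_term_ge0/ltW.
Qed.

Lemma Ktilde_diff_annulus (beta y : R) : 4 < y <= 6 ->
  (Ktilde beta y 3 - Ktilde beta y 1) *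
    \1_(dil_interval 2 4 (2 ^+ 1) `\` dil_interval 2 4 (2 ^+ 0)) y = K2 beta (y - 4).
Proof.
move=> y46; rewrite /Ktilde /K1 !indicE.
have -> : (3 : R) \in [set` `[2, 3]] by apply: mem_set; rewrite /= in_itv /=; lra.
have -> : (1 : R) \in [set` `[2, 3]] = false.
  by apply/negbTE/negP => /set_mem; rewrite /= in_itv /=; lra.
have -> : y \in dil_interval 2 4 (2 ^+ 1) `\` dil_interval 2 4 (2 ^+ 0).
  apply: mem_set; split; rewrite /dil_interval /= in_itv /=; first lra.
  by move=> /andP[_]; lra.
by rewrite /= mul1r mul0r subr0 mulr1 (_ : y - 3 - 1 = y - 4) //; ring.
Qed.

Lemma H2_term_Ktilde_pinfty (beta : R) (s : R -> \bar R) (s0 : R) :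
  0 < beta -> var_exponent s -> 2 < s0 ->
  (forall x, 4 <= x <= 5 -> s x = s0%:E) ->
  H2_term s (Ktilde beta) 2 4 3 1 1 = +oo%E.
Proof.
move=> beta0 [_ s_ge1] s02 s_s0.
rewrite /H2_term (var_norm_K2_pinfty (a := 4) beta0 s02); last 2 first.
- by move=> x x45; apply: s_s0; lra.
- by move=> y y45; rewrite Ktilde_diff_annulus ?ger0_norm ?K2_ge0 //; lra.
set N := var_norm _ _.
have N_fin : (N < +oo)%E by apply: var_norm_indic_itv_lt_pinfty => //; lra.
have NV_gt0 : (0 < N^-1)%E.
  by rewrite lt_def inve_eq0 inve_ge0 var_norm_ge0 lt_eqF.
by rewrite gt0_mulye // gt0_muley // lte_fin mulr_gt0 // exprn_gt0.
Qed.

End H2_condition.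

Theorem mainTheorem20 (R : realType) (beta : R) (s : R -> \bar R) (s0 : R) :
  0 < beta ->
  var_exponent s ->
  2 < s0 ->
  (forall x : R, 4 <= x <= 5 -> s x = s0%:E) ->
  ~ in_H2 s (Ktilde beta) /\ ~ in_H s (Ktilde beta).
Proof.
move=> beta0 s_exp s02 s_s0.
have notH2 : ~ in_H2 s (Ktilde beta).
  apply: (@not_in_H2 _ _ _ 2 4 3 1 1) => //.
  1,2: by rewrite /dil_interval /= in_itv /=; apply/andP; split; lra.
  exact: H2_term_Ktilde_pinfty beta0 s_exp s02 s_s0.
by split => // -[_].
Qed.
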